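(* Let $L\subset\mathbb{R}^n$ be an $n$-dimensional lattice with basis $b_1,\dots,b_n$, and let $P$ be a Delaunay polytope of $L$ with vertex set $V(P)$ that generates $L$ (i.e. $L$ is the lattice generated by the differences of vertices of $P$). Fix a vertex $v_0\in V(P)$ and, for each $v\in V(P)$, write $v-v_0=\sum_{i=1}^n z_i(v)b_i$ with $z_i(v)\in\mathbb{Z}$. Let $$Y(P)=\Big\{y\in\mathbb{Z}^{V(P)}:\ \sum_{v\in V(P)}y(v)v=0,\ \sum_{v\in V(P)}y(v)=0\Big\}$$ and let $\mathcal{B}(P)$ be the linear space of symmetric real $n\times n$ matrices $(b_{ij})$ satisfying $$\sum_{i,j=1}^n\Big(\sum_{v\in V(P)}y(v)z_i(v)z_j(v)\Big)b_{ij}=0\qquad\text{for all }y\in Y(P).$$ Then $\dim\mathcal{B}(P)$ equals the rank of $P$.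
   Context: A Delaunay polytope of a lattice $L\subset\mathbb{R}^n$ is a polytope whose vertex set is $L\cap S$, where $S=S(c,r)$ is an empty sphere: $\|a-c\|^2\ge r^2$ for all $a\in L$, and $S\cap L$ contains $n+1$ affinely independent points. For a finite set $V$, the hypermetric cone $HYP(V)$ is the set of functions $d:V\times V\to\mathbb{R}$ with $d(u,v)=d(v,u)$, $d(v,v)=0$, and $\sum_{u,v\in V}b_ub_v d(u,v)\le 0$ for all $b\in\mathbb{Z}^V$ with $\sum_v b_v=1$. For a Delaunay polytope $P$, the distance $d_P(u,v)=\|u-v\|^2$ on $V=V(P)$ lies in $HYP(V)$; the rank of $P$ is the dimension of the minimal (by inclusion) face of $HYP(V(P))$ containing $d_P$. *)

From HB Require Import structures.
From mathcomp Require Import all_boot all_order all_algebra.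
From mathcomp Require Import reals.
Set Implicit Arguments. Unset Strict Implicit. Unset Printing Implicit Defensive.
Import Order.TTheory GRing.Theory Num.Theory.
Local Open Scope ring_scope.

Section Defs.
Variable R : realType.

Definition sqnorm n (x : 'rV[R]_n) : R := \sum_(i < n) x 0 i ^+ 2.

Definition lattice n (B : 'M[R]_n) (x : 'rV[R]_n) : Prop :=
  exists z : 'I_n -> int, x = \sum_(i < n) (z i)%:~R *: row i B.

(* vtx : 'I_m -> R^n enumerates (injectively) the vertex set V(P) of a
   Delaunay polytope P of L: V(P) = L \cap S(c,r) for an empty sphere
   S(c,r) containing n+1 affinely independent lattice points. *)
Definition is_delaunay n (B : 'M[R]_n) m (vtx : 'I_m -> 'rV[R]_n) : Prop :=
  injective vtx /\
  exists (c : 'rV[R]_n) (r : R),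
    [/\ (forall a, lattice B a -> r ^+ 2 <= sqnorm (a - c)),
        (forall x, (lattice B x /\ sqnorm (x - c) = r ^+ 2) <->
                   exists k, vtx k = x) &
        (exists f : 'I_n.+1 -> 'I_m,
           \matrix_(i < n) (vtx (f (lift ord0 i)) - vtx (f ord0)) \in unitmx)].

Definition generates n (B : 'M[R]_n) m (vtx : 'I_m -> 'rV[R]_n) : Prop :=
  forall x, lattice B x <->
    exists a : 'I_m -> 'I_m -> int,
      x = \sum_(k < m) \sum_(l < m) (a k l)%:~R *: (vtx k - vtx l).

(* the hypermetric cone HYP(V), V = 'I_m, functions V x V -> R as matrices *)
Definition hyp m (d : 'M[R]_m) : Prop :=
  [/\ d^T = d, (forall u, d u u = 0) &
      forall bb : 'I_m -> int, \sum_(u < m) bb u = 1 ->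
        \sum_(u < m) \sum_(v < m) (bb u * bb v)%:~R * d u v <= 0].

Definition distP n m (vtx : 'I_m -> 'rV[R]_n) : 'M[R]_m :=
  \matrix_(u < m, v < m) sqnorm (vtx u - vtx v).

Definition convex_set (V : lmodType R) (F : V -> Prop) : Prop :=
  forall x y (t : R), F x -> F y -> 0 <= t <= 1 -> F (t *: x + (1 - t) *: y).

Definition is_face (V : lmodType R) (C F : V -> Prop) : Prop :=
  [/\ (forall x, F x -> C x), convex_set F &
      forall x y (t : R), C x -> C y -> 0 < t < 1 ->
        F (t *: x + (1 - t) *: y) -> F x /\ F y].

Definition min_face (V : lmodType R) (C : V -> Prop) (d : V) : V -> Prop :=
  fun x => forall F, is_face C F -> F d -> F x.

Definition is_dim (V : vectType R) (S : V -> Prop) (k : nat) : Prop :=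
  (exists s : seq V, [/\ (forall v, v \in s -> S v), size s = k & free s]) /\
  (forall s : seq V, (forall v, v \in s -> S v) -> free s -> (size s <= k)%N).

Definition inY n m (vtx : 'I_m -> 'rV[R]_n) (y : 'I_m -> int) : Prop :=
  \sum_(k < m) (y k)%:~R *: vtx k = 0 /\ \sum_(k < m) y k = 0.

(* b \in B(P), z k i = z_i(vtx k) *)
Definition Bspace n m (vtx : 'I_m -> 'rV[R]_n) (z : 'I_m -> 'I_n -> int)
    (b : 'M[R]_n) : Prop :=
  b^T = b /\
  forall y, inY vtx y ->
    \sum_(i < n) \sum_(j < n) (\sum_(k < m) (y k * z k i * z k j)%:~R) * b i j = 0.

End Defs.

From HB Require Import structures.
From mathcomp Require Import all_boot all_order all_algebra.
From mathcomp Require Import reals boolp.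
From mathcomp Require Import ring lra zify.
Set Implicit Arguments. Unset Strict Implicit. Unset Printing Implicit Defensive.
Import Order.TTheory GRing.Theory Num.Theory.
Local Open Scope ring_scope.

(* The quadratic form of d_P at an integral b with sum 1 is -2 times the power
   of the barycenter z(b) with respect to the empty sphere, which vanishes
   exactly when the barycenter is a vertex, e.g. for b = e_w + y with y in
   Y(P).  These equations cut out a face of HYP containing d_P.  On it each row
   of a distance is orthogonal to Y(P), hence, through an integral Cramer
   relation with an affine basis of vertices, affine in the coordinates z; so
   the distance is d_M(u,v) = (z(u)-z(v)) M (z(u)-z(v))^T with M in B(P).
   Conversely, for M in B(P) the form of d_M at b is twice a quadratic function
   of z(b) vanishing at the vertices, which the power dominates on the lattice;
   so d_P +- eps d_M are hypermetric and d_M lies in the span of the minimal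
   face.  Finally M |-> d_M is injective on symmetric matrices. *)

Section SpanDimension.
Variables (R : realType) (V : vectType R).
Implicit Types (S : V -> Prop) (s t : seq V).

Lemma exists_free_spanning S :
  exists t, [/\ {in t, forall v, S v}, free t & forall v, S v -> v \in <<t>>%VS].
Proof.
pose P k := `[< exists t, [/\ {in t, forall v, S v}, free t & size t = k] >].
have P0 : exists k, P k by exists 0%N; apply/asboolP; exists [::]; rewrite nil_free.
have Pdim k : P k -> (k <= \dim (fullv : {vspace V}))%N.
  by move=> /asboolP[t [_ /eqnP <- <-]]; apply/dimvS/subvf.
case: (ex_maxnP P0 Pdim) => k /asboolP[t [tS ft <-]] tmax.
exists t; split=> // v Sv; apply: contraT => tv.
have /tmax : P (size t).+1.
  apply/asboolP; exists (v :: t); rewrite free_cons tv ft; split=> //.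
  by move=> w; rewrite inE => /predU1P[->|/tS].
by rewrite ltnn.
Qed.

Lemma size_free_le_span s t : free s -> {subset s <= <<t>>%VS} -> (size s <= size t)%N.
Proof. by move=> /eqnP <- /span_subvP/dimvS/leq_trans; apply; apply: dim_span. Qed.

Lemma is_dim_free_spanning S t :
  {in t, forall v, S v} -> free t -> (forall v, S v -> v \in <<t>>%VS) ->
  is_dim S (size t).
Proof.
move=> tS ft St; split; first by exists t.
by move=> s sS fs; apply: size_free_le_span => // v /sS /St.
Qed.

Lemma span_sub_subspace S t :
  S 0 -> (forall a u v, S u -> S v -> S (a *: u + v)) ->
  {in t, forall v, S v} -> forall v, v \in <<t>>%VS -> S v.
Proof.
move=> S0 Slin tS v /(coord_span (X := in_tuple t)) ->.
elim/big_rec: _ => // i u _ Su; apply: Slin Su; apply/tS/mem_nth; exact: ltn_ord.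
Qed.

End SpanDimension.

Section LinearImage.
Variables (R : realType) (U V : vectType R) (f : {linear U -> V}).
Variables (S : U -> Prop) (T : V -> Prop).
Hypotheses (S0 : S 0) (Slin : forall a u v, S u -> S v -> S (a *: u + v)).
Hypothesis f_inj : forall u, S u -> f u = 0 -> u = 0.
Hypothesis T_image : forall v, T v -> exists2 u, S u & v = f u.
Hypothesis image_span :
  forall u, S u -> exists2 s, {in s, forall v, T v} & f u \in <<s>>%VS.

Lemma is_dim_linear_image : exists k, is_dim S k /\ is_dim T k.
Proof.
have [t [tS ft St]] := exists_free_spanning S.
have [t' [tT ft' Tt']] := exists_free_spanning T.
have mapE : map f t = map (linfun f) t by apply/esym/eq_map/lfunE.
have span_map u : S u -> f u \in <<map f t>>%VS.
  by move=> /St /(memv_img (linfun f)); rewrite limg_span -mapE lfunE.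
have fr : free (map f t).
  have kerI : (<<t>> :&: lker (linfun f))%VS = 0%VS.
    apply/eqP; rewrite -subv0; apply/subvP => u; rewrite memv_cap memv_ker lfunE.
    move=> /andP[/(span_sub_subspace S0 Slin tS) Su /eqP fu0].
    by rewrite (f_inj Su fu0) mem0v.
  by rewrite mapE /free -limg_span limg_dim_eq // size_map.
exists (size t); split; first exact: is_dim_free_spanning.
suff -> : size t = size t' by exact: is_dim_free_spanning.
have le_t_t' : (size (map f t) <= size t')%N.
  apply: size_free_le_span => // _ /mapP[u /tS Su ->].
  have [s sT fus] := image_span Su; apply: subvP fus; apply/span_subvP.
  by move=> v /sT /Tt'.
have le_t'_t : (size t' <= size (map f t))%N.
  by apply: size_free_le_span => // v /tT /T_image[u Su ->]; exact: span_map.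
by apply/eqP; rewrite eqn_leq -{1}(size_map f t) le_t_t' -(size_map f t) le_t'_t.
Qed.

End LinearImage.

Section BilinearForm.
Variables (R : realType) (n : nat).
Implicit Types (M A : 'M[R]_n) (x y : 'rV[R]_n).

Definition bform M x y : R := (x *m M *m y^T) 0 0.

Lemma bformE M x y : bform M x y = \sum_i \sum_j x 0 i * M i j * y 0 j.
Proof.
rewrite /bform !mxE; under eq_bigr do rewrite !mxE big_distrl /=.
by rewrite exchange_big.
Qed.

Lemma bformDl M x1 x2 y : bform M (x1 + x2) y = bform M x1 y + bform M x2 y.
Proof. by rewrite /bform !mulmxDl mxE. Qed.

Lemma bformZl M a x y : bform M (a *: x) y = a * bform M x y.
Proof. by rewrite /bform -!scalemxAl mxE. Qed.

Lemma bformDr M x y1 y2 : bform M x (y1 + y2) = bform M x y1 + bform M x y2.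
Proof. by rewrite /bform linearD /= mulmxDr mxE. Qed.

Lemma bformZr M a x y : bform M x (a *: y) = a * bform M x y.
Proof. by rewrite /bform linearZ /= -scalemxAr mxE. Qed.

Lemma bformNl M x y : bform M (- x) y = - bform M x y.
Proof. by rewrite -scaleN1r bformZl mulN1r. Qed.

Lemma bformNr M x y : bform M x (- y) = - bform M x y.
Proof. by rewrite -scaleN1r bformZr mulN1r. Qed.

Lemma bformBl M x1 x2 y : bform M (x1 - x2) y = bform M x1 y - bform M x2 y.
Proof. by rewrite bformDl bformNl. Qed.

Lemma bformBr M x y1 y2 : bform M x (y1 - y2) = bform M x y1 - bform M x y2.
Proof. by rewrite bformDr bformNr. Qed.

Lemma bform0l M y : bform M 0 y = 0.
Proof. by rewrite /bform !mul0mx mxE. Qed.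

Lemma bform_suml M (I : finType) (a : I -> R) (p : I -> 'rV[R]_n) y :
  bform M (\sum_u a u *: p u) y = \sum_u a u * bform M (p u) y.
Proof.
elim/big_rec2: _ => [|u s1 s2 _ <-]; first exact: bform0l.
by rewrite bformDl bformZl.
Qed.

Lemma bform_sumr M (I : finType) (a : I -> R) (p : I -> 'rV[R]_n) x :
  bform M x (\sum_u a u *: p u) = \sum_u a u * bform M x (p u).
Proof.
elim/big_rec2: _ => [|u s1 s2 _ <-]; first by rewrite /bform trmx0 mulmx0 mxE.
by rewrite bformDr bformZr.
Qed.

Lemma bform_tr M x y : bform M^T x y = bform M y x.
Proof.
have trE (A : 'M[R]_1) : A 0 0 = A^T 0 0 by rewrite mxE.
by rewrite /bform trE !trmx_mul !trmxK mulmxA.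
Qed.

Lemma bform_sym M x y : M^T = M -> bform M x y = bform M y x.
Proof. by move=> sM; rewrite -bform_tr sM. Qed.

Lemma bformDM M1 M2 x y : bform (M1 + M2) x y = bform M1 x y + bform M2 x y.
Proof. by rewrite /bform mulmxDr mulmxDl mxE. Qed.

Lemma bformZM a M x y : bform (a *: M) x y = a * bform M x y.
Proof. by rewrite /bform -scalemxAr -scalemxAl mxE. Qed.

Lemma bform_mulmx M A x y : bform M (x *m A) (y *m A) = bform (A *m M *m A^T) x y.
Proof. by rewrite /bform trmx_mul !mulmxA. Qed.

Lemma bform_row M A i j : bform M (row i A) (row j A) = (A *m M *m A^T) i j.
Proof. by rewrite /bform -row_mul tr_row !mxE; apply: eq_bigr => k _; rewrite !mxE. Qed.

Lemma sqnorm_bform x : sqnorm x = bform 1%:M x x.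
Proof.
rewrite /sqnorm bformE; apply: eq_bigr => i _.
rewrite (bigD1 i) //= big1 ?addr0; first by rewrite mxE eqxx mulr1 expr2.
by move=> j /negPf ji; rewrite mxE eq_sym ji mulr0 mul0r.
Qed.

Lemma bformBB M x y : M^T = M ->
  bform M (x - y) (x - y) = bform M x x + bform M y y - 2 * bform M x y.
Proof. by move=> sM; rewrite bformBl !bformBr (bform_sym y x sM); ring. Qed.

Lemma bform_sum_diff M m (b : 'I_m -> R) (p : 'I_m -> 'rV[R]_n) : M^T = M ->
  \sum_u \sum_v b u * b v * bform M (p u - p v) (p u - p v) =
  2 * (\sum_v b v) * (\sum_u b u * bform M (p u) (p u))
  - 2 * bform M (\sum_u b u *: p u) (\sum_u b u *: p u).
Proof.
move=> sM; set Q := \sum_u b u * bform M (p u) (p u).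
have diag_sum : \sum_u \sum_v b u * b v * bform M (p u) (p u) = (\sum_v b v) * Q.
  rewrite mulr_sumr; apply: eq_bigr => u _; rewrite mulr_suml.
  by apply: eq_bigr => v _; ring.
have cross_sum : bform M (\sum_u b u *: p u) (\sum_u b u *: p u) =
    \sum_u \sum_v b u * (b v * bform M (p u) (p v)).
  by rewrite bform_suml; apply: eq_bigr => u _; rewrite bform_sumr mulr_sumr.
transitivity (\sum_u \sum_v (b u * b v * bform M (p u) (p u)
   + b v * b u * bform M (p v) (p v) - 2 * (b u * (b v * bform M (p u) (p v))))).
  by apply: eq_bigr => u _; apply: eq_bigr => v _; rewrite bformBB //; ring.
under eq_bigr do rewrite sumrB big_split /=.
rewrite sumrB big_split /= diag_sum exchange_big /= diag_sum cross_sum.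
under [X in _ - X = _]eq_bigr do rewrite -mulr_sumr.
by rewrite -mulr_sumr; ring.
Qed.

End BilinearForm.

Section IntegerPoints.
Variables (R : realType) (n : nat).
Implicit Types (x y : 'rV[R]_n).

Lemma sqnorm_ge0 x : 0 <= sqnorm x.
Proof. by apply: sumr_ge0 => i _; apply: sqr_ge0. Qed.

Lemma sqr_coord_le_sqnorm x i : x 0 i ^+ 2 <= sqnorm x.
Proof.
by rewrite /sqnorm (bigD1 i) //= lerDl; apply: sumr_ge0 => j _; apply: sqr_ge0.
Qed.

Lemma norm_le_1Dsqr (a : R) : `|a| <= 1 + a ^+ 2.
Proof.
have := sqr_ge0 (`|a| - 1); have := real_normK (num_real a).
have := normr_ge0 a; nra.
Qed.

Lemma sqnormB_le x y : sqnorm (x - y) <= 2 * sqnorm x + 2 * sqnorm y.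
Proof.
rewrite /sqnorm !mulr_sumr -big_split /=; apply: ler_sum => i _.
by rewrite !mxE; have := sqr_ge0 (x 0 i + y 0 i); nra.
Qed.

Lemma norm_mul_col_le (g : 'cV[R]_n) x :
  `|(x *m g) 0 0| <= (\sum_j `|g j 0|) * (1 + sqnorm x).
Proof.
rewrite mxE mulr_suml; apply: le_trans (ler_norm_sum _ _ _) _.
apply: ler_sum => j _; rewrite normrM mulrC; apply: ler_wpM2l => //.
by apply: le_trans (norm_le_1Dsqr _) _; rewrite lerD2l sqr_coord_le_sqnorm.
Qed.

Lemma norm_bform_le (M : 'M[R]_n) x :
  `|bform M x x| <= (\sum_i \sum_j `|M i j|) * sqnorm x.
Proof.
have prod_le (a b S : R) : a ^+ 2 <= S -> b ^+ 2 <= S -> `|a * b| <= S.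
  move=> ha hb; rewrite normrM; have := sqr_ge0 (`|a| - `|b|).
  have := real_normK (num_real a); have := real_normK (num_real b); nra.
rewrite bformE mulr_suml; apply: le_trans (ler_norm_sum _ _ _) _.
apply: ler_sum => i _; rewrite mulr_suml; apply: le_trans (ler_norm_sum _ _ _) _.
apply: ler_sum => j _; rewrite -mulrA mulrCA normrM.
by apply: ler_wpM2l => //; apply: prod_le; apply: sqr_coord_le_sqnorm.
Qed.

Definition int_row (zi : 'I_n -> int) : 'rV[R]_n := \row_i (zi i)%:~R.

(* Only finitely many integer points lie in a ball: they are enumerated by
   finite functions into ['I_(2 N).+1], shifted by [N]. *)
Lemma int_ball_lower_bound (F : 'rV[R]_n -> R) (T : R) :
  exists2 e, 0 < e & forall zi, sqnorm (int_row zi) < T ->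
    0 < F (int_row zi) -> e <= F (int_row zi).
Proof.
pose N := Num.bound (1 + T).
pose shift (phi : {ffun 'I_n -> 'I_(2 * N).+1}) : 'I_n -> int :=
  fun i => (phi i : nat)%:Z - N%:Z.
pose e := \big[Order.min/1]_(phi | 0 < F (int_row (shift phi))) F (int_row (shift phi)).
exists e => [|zi zi_in Fpos]; first exact: lt_bigmin.
have hN : 1 + T < N%:R.
  by apply: archi_boundP; have := sqnorm_ge0 (int_row zi); lra.
have zi_lt i : (`|zi i| < N%:Z)%R.
  rewrite -(ltr_int R) intr_norm; apply: le_lt_trans (norm_le_1Dsqr _) _.
  by have := sqr_coord_le_sqnorm (int_row zi) i; rewrite mxE; lra.
pose phi : {ffun 'I_n -> 'I_(2 * N).+1} := [ffun i => inord (absz (zi i + N%:Z))].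
have rowE : int_row zi = int_row (shift phi).
  apply/rowP => i; rewrite !mxE /shift ffunE; have := zi_lt i.
  by move=> lt; rewrite inordK; [congr (_%:~R); lia | lia].
by rewrite rowE in Fpos *; apply: bigmin_le_cond.
Qed.

(* Far from the origin [h] grows like [sqnorm] while [g] grows at most like
   it, and near the origin only finitely many integer points need checking. *)
Lemma int_domination (g h : 'rV[R]_n -> R) (Cg Ch : R) :
  0 <= Cg -> 0 <= Ch ->
  (forall zi, `|g (int_row zi)| <= Cg * (1 + sqnorm (int_row zi))) ->
  (forall zi, sqnorm (int_row zi) <= Ch * (1 + h (int_row zi))) ->
  (forall zi, 0 <= h (int_row zi)) ->
  (forall zi, h (int_row zi) = 0 -> g (int_row zi) = 0) ->
  exists2 eps, 0 < eps & forall zi, eps * `|g (int_row zi)| <= h (int_row zi).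
Proof.
move=> Cg0 Ch0 g_le sqnorm_le h_ge0 h0_g0.
pose T := 2 * Ch + 1; pose K := 2 * Cg * Ch.
have K0 : 0 <= K by rewrite /K !mulr_ge0.
have [e2 e2_gt0 e2_le] := int_ball_lower_bound (fun x => h x / (1 + `|g x|)) T.
pose e1 := (K + 1)^-1.
have e1_gt0 : 0 < e1 by rewrite invr_gt0; lra.
exists (Order.min e1 e2) => [|zi]; first by rewrite lt_min e1_gt0 e2_gt0.
have G0 := normr_ge0 (g (int_row zi)); have H0 := h_ge0 zi.
have S0 := sqnorm_ge0 (int_row zi).
have [far|near] := leP T (sqnorm (int_row zi)).
  apply: le_trans (_ : e1 * `|g (int_row zi)| <= _).
    by apply: ler_wpM2r => //; rewrite ge_min lexx.
  have S1 : 1 + sqnorm (int_row zi) <= 2 * Ch * h (int_row zi).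
    by have := sqnorm_le zi; rewrite /T in far; nra.
  have G_le : `|g (int_row zi)| <= K * h (int_row zi).
    by have := g_le zi; have := ler_wpM2l Cg0 S1; rewrite /K; nra.
  rewrite ler_pdivrMl ?ltr_pwDr //; nra.
apply: le_trans (_ : e2 * `|g (int_row zi)| <= _).
  by apply: ler_wpM2r => //; rewrite ge_min lexx orbT.
have [H_eq0|H_neq0] := eqVneq (h (int_row zi)) 0.
  by rewrite H_eq0 h0_g0 // normr0 mulr0.
have H_gt0 : 0 < h (int_row zi) by rewrite lt_def H_neq0 H0.
have G1_gt0 : 0 < 1 + `|g (int_row zi)| by lra.
by have := e2_le zi near (divr_gt0 H_gt0 G1_gt0); rewrite ler_pdivlMr //; nra.
Qed.
End IntegerPoints.
Arguments int_row {R n}.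

Section Delaunay.
Variables (R : realType) (n m : nat) (B : 'M[R]_n) (vtx : 'I_m -> 'rV[R]_n).
Variables (k0 : 'I_m) (z : 'I_m -> 'I_n -> int).
Hypothesis B_unit : B \in unitmx.
Hypothesis vtx_coord : forall k, vtx k - vtx k0 = \sum_(i < n) (z k i)%:~R *: row i B.

Definition zrow k : 'rV[R]_n := int_row (z k).

Lemma vtxE k : vtx k = vtx k0 + zrow k *m B.
Proof.
rewrite mulmx_sum_row -[vtx k](subrK (vtx k0)) vtx_coord addrC.
by congr (_ + _); apply: eq_bigr => i _; rewrite mxE.
Qed.

Lemma vtxB a b : vtx a - vtx b = (zrow a - zrow b) *m B.
Proof. by rewrite (vtxE a) (vtxE b) mulmxBl opprD addrACA subrr add0r. Qed.

Lemma zrow_k0 : zrow k0 = 0.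
Proof.
have : zrow k0 *m B = 0 by apply: (addrI (vtx k0)); rewrite -vtxE addr0.
by move/(congr1 (mulmx^~ (invmx B))); rewrite mulmxK // mul0mx.
Qed.

Definition orthY (h : 'I_m -> R) :=
  forall y, inY vtx y -> \sum_k (y k)%:~R * h k = 0.

Lemma orthY_sum (I : finType) (a : I -> R) (F : I -> 'I_m -> R) :
  (forall i, orthY (F i)) -> orthY (fun w => \sum_i a i * F i w).
Proof.
move=> FY y yY; under eq_bigr do rewrite mulr_sumr.
rewrite exchange_big big1 // => i _ /=.
rewrite -[RHS](mulr0 (a i)) -[X in _ * X](FY i y yY) mulr_sumr.
by apply: eq_bigr => k _; rewrite mulrCA.
Qed.

Lemma orthYB h1 h2 : orthY h1 -> orthY h2 -> orthY (fun w => h1 w - h2 w).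
Proof.
by move=> Y1 Y2 y yY; under eq_bigr do rewrite mulrBr; rewrite sumrB Y1 // Y2 // subrr.
Qed.

Lemma eq_orthY h1 h2 : h1 =1 h2 -> orthY h1 -> orthY h2.
Proof.
by move=> h12 Y1 y yY; rewrite -[RHS](Y1 y yY); apply: eq_bigr => k _; rewrite h12.
Qed.

Lemma Bspace_sumE (M : 'M[R]_n) (y : 'I_m -> int) :
  \sum_i \sum_j (\sum_k (y k * z k i * z k j)%:~R) * M i j =
  \sum_k (y k)%:~R * bform M (zrow k) (zrow k).
Proof.
transitivity (\sum_i \sum_j \sum_k (y k)%:~R * (zrow k 0 i * M i j * zrow k 0 j)).
  apply: eq_bigr => i _; apply: eq_bigr => j _; rewrite mulr_suml.
  by apply: eq_bigr => k _; rewrite !mxE !rmorphM; ring.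
under eq_bigr do rewrite exchange_big /=.
rewrite exchange_big /=; apply: eq_bigr => k _.
by rewrite bformE mulr_sumr; apply: eq_bigr => i _; rewrite mulr_sumr.
Qed.

Lemma BspaceP M :
  Bspace vtx z M <-> M^T = M /\ orthY (fun k => bform M (zrow k) (zrow k)).
Proof. by split=> -[sM MY]; split=> // y /MY; rewrite Bspace_sumE. Qed.

Lemma Bspace_lin a M N : Bspace vtx z M -> Bspace vtx z N -> Bspace vtx z (a *: M + N).
Proof.
move=> /BspaceP[sM MY] /BspaceP[sN NY]; apply/BspaceP; split.
  by rewrite linearD linearZ /= sM sN.
move=> y yY; under eq_bigr do rewrite bformDM bformZM mulrDr mulrCA.
by rewrite big_split /= -mulr_sumr MY // NY // mulr0 addr0.
Qed.

Variable f : 'I_n.+1 -> 'I_m.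
Hypothesis f_indep : \matrix_(i < n) (vtx (f (lift ord0 i)) - vtx (f ord0)) \in unitmx.

Local Notation e := (f ord0).
Local Notation f' i := (f (lift ord0 i)).

Definition Zint : 'M[int]_n := \matrix_(i, j) (z (f' i) j - z e j).
Definition Zmx : 'M[R]_n := map_mx intr Zint.

Lemma row_Zmx i : row i Zmx = zrow (f' i) - zrow e.
Proof. by apply/rowP => j; rewrite !mxE rmorphB. Qed.

Lemma Zmx_unit : Zmx \in unitmx.
Proof.
have ZB : \matrix_(i < n) (vtx (f' i) - vtx e) = Zmx *m B.
  by apply/row_matrixP => i; rewrite row_mul rowK row_Zmx vtxB.
by move: f_indep; rewrite ZB unitmx_mul => /andP[].
Qed.

Definition Delta : int := \det Zint.

Lemma det_Zmx : \det Zmx = Delta%:~R.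
Proof. exact: det_map_mx. Qed.

Lemma Delta_neq0 : (Delta%:~R : R) != 0.
Proof. by rewrite -det_Zmx -unitfE -unitmxE Zmx_unit. Qed.

Definition mu w : 'rV[int]_n := \row_j (z w j - z e j) *m \adj Zint.

Lemma map_mu w : map_mx intr (mu w) = (zrow w - zrow e) *m \adj Zmx.
Proof.
rewrite map_mxM map_mx_adj; congr (_ *m _).
by apply/rowP => j; rewrite !mxE rmorphB.
Qed.

(* By Cramer's rule [Delta *: (z w - z e) = mu w *m Zint] with [mu w]
   integral: the affine dependence of [w] on the affine basis [f] becomes an
   integral relation [relY w] in [Y(P)]. *)
Definition relY w (v : 'I_m) : int :=
  Delta * (v == w)%:Z - Delta * (v == e)%:Z
  - \sum_i mu w 0 i * ((v == f' i)%:Z - (v == e)%:Z).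

Lemma sum_indicator (V : lmodType R) (p : 'I_m -> V) a :
  \sum_v ((v == a)%:Z)%:~R *: p v = p a.
Proof.
rewrite (bigD1 a) //= eqxx scale1r big1 ?addr0 // => v /negPf ->.
by rewrite scale0r.
Qed.

Lemma sum_relY (V : lmodType R) (p : 'I_m -> V) w :
  \sum_v (relY w v)%:~R *: p v = (Delta%:~R : R) *: (p w - p e)
    - \sum_i ((mu w 0 i)%:~R : R) *: (p (f' i) - p e).
Proof.
rewrite /relY.
under eq_bigr do rewrite !rmorphB /= rmorph_sum !rmorphM /= !scalerBl
   scaler_suml -!scalerA.
rewrite !sumrB -!scaler_sumr !sum_indicator scalerBr; congr (_ - _).
rewrite exchange_big /=; apply: eq_bigr => i _.
under eq_bigr do rewrite rmorphM rmorphB /= -scalerA scalerBl.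
by rewrite -scaler_sumr sumrB !sum_indicator.
Qed.

Lemma relY_inY w : inY vtx (relY w).
Proof.
split.
  rewrite sum_relY vtxB.
  have -> : \sum_i ((mu w 0 i)%:~R : R) *: (vtx (f' i) - vtx e)
     = map_mx intr (mu w) *m (Zmx *m B).
    rewrite mulmx_sum_row; apply: eq_bigr => i _.
    by rewrite row_mul row_Zmx -vtxB [in RHS]mxE.
  rewrite map_mu mulmxA -(mulmxA _ (\adj Zmx)) mul_adj_mx det_Zmx.
  by rewrite mul_mx_scalar -scalemxAl subrr.
have := sum_relY (fun _ => 1%:M : 'M[R]_1) w.
rewrite /= subrr scaler0.
under [X in _ = _ - X]eq_bigr do rewrite scaler0.
rewrite big1_eq subr0 -scaler_suml -rmorph_sum => /matrixP /(_ 0 0).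
rewrite !mxE eqxx mulr1.
by move/eqP; rewrite intr_eq0 => /eqP.
Qed.

Definition affine_coef (h : 'I_m -> R) : 'cV[R]_n :=
  invmx Zmx *m \col_i (h (f' i) - h e).

Lemma orthY_affine h : orthY h -> forall w,
  h w = h e + ((zrow w - zrow e) *m affine_coef h) 0 0.
Proof.
move=> hY w; have := hY _ (relY_inY w).
rewrite (sum_relY (h : 'I_m -> R^o)) => /eqP; rewrite subr_eq0 => /eqP relE.
have cramer : (Delta%:~R : R) * (h w - h e) =
    ((zrow w - zrow e) *m \adj Zmx *m \col_i (h (f' i) - h e)) 0 0.
  by rewrite [LHS]relE -map_mu mxE; apply: eq_bigr => i _; rewrite !mxE.
rewrite /affine_coef /invmx Zmx_unit det_Zmx mulmxA -scalemxAr -scalemxAl.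
by rewrite mxE -cramer mulKf ?Delta_neq0 // addrC subrK.
Qed.

Definition hform (d : 'M[R]_m) (b : 'I_m -> int) : R :=
  \sum_u \sum_v (b u * b v)%:~R * d u v.

Lemma hformD d1 d2 b : hform (d1 + d2) b = hform d1 b + hform d2 b.
Proof.
rewrite /hform -big_split; apply: eq_bigr => u _; rewrite -big_split.
by apply: eq_bigr => v _; rewrite mxE mulrDr.
Qed.

Lemma hformZ a d b : hform (a *: d) b = a * hform d b.
Proof.
rewrite /hform mulr_sumr; apply: eq_bigr => u _; rewrite mulr_sumr.
by apply: eq_bigr => v _; rewrite mxE mulrCA.
Qed.

Definition dist_form (M : 'M[R]_n) : 'M[R]_m :=
  \matrix_(u, v) bform M (zrow u - zrow v) (zrow u - zrow v).

Lemma dist_form_is_linear : linear dist_form.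
Proof. by move=> a M1 M2; apply/matrixP => u v; rewrite !mxE bformDM bformZM. Qed.

HB.instance Definition _ := GRing.isLinear.Build R _ _ _ dist_form dist_form_is_linear.

Lemma dist_form_tr M : (dist_form M)^T = dist_form M.
Proof. by apply/matrixP => u v; rewrite !mxE -opprB bformNl bformNr opprK. Qed.

Lemma dist_form_diag M u : dist_form M u u = 0.
Proof. by rewrite mxE subrr bform0l. Qed.

Variables (c : 'rV[R]_n) (r : R).
Hypothesis sphere_empty : forall a, lattice B a -> r ^+ 2 <= sqnorm (a - c).
Hypothesis sphere_vtx : forall x,
  (lattice B x /\ sqnorm (x - c) = r ^+ 2) <-> exists k, vtx k = x.

Lemma sqnorm_vtx u : sqnorm (vtx u - c) = r ^+ 2.
Proof. by have [_ ->] := (sphere_vtx (vtx u)).2 (ex_intro _ u erefl). Qed.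

Lemma sum_intr_eq1 (b : 'I_m -> int) : \sum_u b u = 1 -> \sum_u ((b u)%:~R : R) = 1.
Proof. by rewrite -rmorph_sum => ->. Qed.

Lemma hform_distP b : \sum_u b u = 1 ->
  hform (distP vtx) b = 2 * r ^+ 2 - 2 * sqnorm (\sum_u (b u)%:~R *: vtx u - c).
Proof.
move=> b1; transitivity (\sum_u \sum_v ((b u)%:~R * (b v)%:~R) *
    bform 1%:M ((vtx u - c) - (vtx v - c)) ((vtx u - c) - (vtx v - c))).
  apply: eq_bigr => u _; apply: eq_bigr => v _.
  by rewrite mxE rmorphM /= sqnorm_bform opprB addrA subrK.
rewrite bform_sum_diff ?trmx1 // sum_intr_eq1 // mulr1.
under eq_bigr do rewrite -sqnorm_bform sqnorm_vtx.
rewrite -mulr_suml sum_intr_eq1 // mul1r -sqnorm_bform.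
under [in X in sqnorm X]eq_bigr do rewrite scalerBr.
by rewrite sumrB -scaler_suml sum_intr_eq1 // scale1r.
Qed.

Definition sphere_power (x : 'rV[R]_n) : R := sqnorm (vtx k0 + x *m B - c) - r ^+ 2.

Definition barycenter (b : 'I_m -> int) : 'rV[R]_n := \sum_u (b u)%:~R *: zrow u.

Lemma barycenterE b : barycenter b = int_row (fun i => \sum_u b u * z u i).
Proof.
apply/rowP => i; rewrite !mxE summxE rmorph_sum; apply: eq_bigr => u _.
by rewrite !mxE rmorphM.
Qed.

Lemma hform_distP_power b : \sum_u b u = 1 ->
  hform (distP vtx) b = - 2 * sphere_power (barycenter b).
Proof.
move=> b1; rewrite hform_distP // /sphere_power.
under eq_bigr do rewrite vtxE scalerDr.
rewrite big_split /= -scaler_suml sum_intr_eq1 // scale1r /barycenter mulmx_suml.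
under [in RHS]eq_bigr do rewrite -scalemxAl.
by lra.
Qed.

Lemma lattice_int_row zi : lattice B (vtx k0 + int_row zi *m B).
Proof.
have [[zk ->] _] := (sphere_vtx (vtx k0)).2 (ex_intro _ k0 erefl).
exists (fun i => zk i + zi i).
rewrite mulmx_sum_row -big_split /=; apply: eq_bigr => i _.
by rewrite mxE rmorphD scalerDl.
Qed.

Lemma sphere_power_ge0 zi : 0 <= sphere_power (int_row zi).
Proof. by rewrite subr_ge0; apply/sphere_empty/lattice_int_row. Qed.

Lemma sphere_power_eq0 zi :
  sphere_power (int_row zi) = 0 -> exists w, int_row zi = zrow w.
Proof.
move/eqP; rewrite subr_eq0 => /eqP on_sphere.
have [w] := (sphere_vtx _).1 (conj (lattice_int_row zi) on_sphere).
rewrite vtxE => /addrI /(congr1 (mulmx^~ (invmx B))).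
by rewrite !mulmxK // => <-; exists w.
Qed.

Lemma hyp_distP : hyp (distP vtx).
Proof.
split.
- apply/matrixP => u v; rewrite !mxE /sqnorm.
  by apply: eq_bigr => i _; rewrite -opprB mxE sqrrN.
- by move=> u; rewrite mxE subrr /sqnorm big1 // => i _; rewrite mxE expr0n.
- move=> b b1; rewrite -/(hform _ b) hform_distP_power // barycenterE.
  by have := sphere_power_ge0 (fun i => \sum_u b u * z u i); lra.
Qed.

Lemma hyp_convex : convex_set (@hyp R m).
Proof.
move=> x y t [tx dx qx] [ty dy qy] /andP[t0 t1]; split.
- by rewrite linearD !linearZ /= tx ty.
- by move=> u; rewrite !mxE dx dy !mulr0 addr0.
- move=> b b1; rewrite -/(hform _ b) hformD !hformZ.
  have qx0 : hform x b <= 0 := qx b b1; have qy0 : hform y b <= 0 := qy b b1.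
  have t1' : 0 <= 1 - t by lra.
  by have := mulr_ge0_le0 t0 qx0; have := mulr_ge0_le0 t1' qy0; lra.
Qed.

Definition shiftY w (y : 'I_m -> int) v : int := (v == w)%:Z + y v.

Lemma sum_shiftY w y : inY vtx y -> \sum_v shiftY w y v = 1.
Proof.
by case=> _ y0; rewrite big_split /= y0 addr0 (bigD1 w) //= eqxx big1 // => u /negPf ->.
Qed.

(* Every [b = shiftY w y] with [y] in [Y(P)] has barycenter the vertex [w],
   where the quadratic form of [distP vtx] vanishes; [faceY] is the face of
   the hypermetric cone cut out by these equations. *)
Definition faceY (x : 'M[R]_m) : Prop :=
  hyp x /\ forall w y, inY vtx y -> hform x (shiftY w y) = 0.

Lemma faceY_face : is_face (@hyp R m) faceY.
Proof.
split=> [x []//|x y t [hx qx] [hy qy] ht|x y t hx hy /andP[t0 t1] [_ qxy]].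
  split; first exact: hyp_convex.
  by move=> w y' y'Y; rewrite hformD !hformZ qx // qy // !mulr0 addr0.
have both0 w y' : inY vtx y' ->
    hform x (shiftY w y') = 0 /\ hform y (shiftY w y') = 0.
  move=> y'Y; have := qxy w y' y'Y; rewrite hformD !hformZ.
  have qx0 : hform x (shiftY w y') <= 0 by case: hx => _ _; apply; exact: sum_shiftY.
  have qy0 : hform y (shiftY w y') <= 0 by case: hy => _ _; apply; exact: sum_shiftY.
  have t0' : 0 <= t by lra.
  have t1' : 0 <= 1 - t by lra.
  have le1 : t * hform x (shiftY w y') <= 0 by rewrite mulr_ge0_le0.
  have le2 : (1 - t) * hform y (shiftY w y') <= 0 by rewrite mulr_ge0_le0.
  by split; nra.
by split; split=> // w y' /(both0 w)[].
Qed.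

Lemma faceY_distP : faceY (distP vtx).
Proof.
split=> [|w y yY]; first exact: hyp_distP.
rewrite hform_distP ?sum_shiftY //.
under eq_bigr do rewrite rmorphD scalerDl.
by rewrite big_split /= sum_indicator yY.1 addr0 sqnorm_vtx subrr.
Qed.

Lemma sum_indicator_mul (F : 'I_m -> R) w : \sum_u ((u == w)%:Z)%:~R * F u = F w.
Proof. exact: (sum_indicator (F : 'I_m -> R^o)). Qed.

Lemma hform_shiftY x w y : x^T = x -> (forall u, x u u = 0) ->
  hform x (shiftY w y) = 2 * \sum_v (y v)%:~R * x w v + hform x y.
Proof.
move=> sx dx; have xC u v : x u v = x v u by rewrite -[in LHS]sx mxE.
rewrite /hform /shiftY.
transitivity (
  \sum_u \sum_v ((u == w)%:Z)%:~R * (((v == w)%:Z)%:~R * x u v)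
+ \sum_u \sum_v ((u == w)%:Z)%:~R * ((y v)%:~R * x u v)
+ \sum_u \sum_v (y u)%:~R * (((v == w)%:Z)%:~R * x u v)
+ \sum_u \sum_v (y u)%:~R * ((y v)%:~R * x u v)).
  rewrite -!big_split; apply: eq_bigr => u _; rewrite -!big_split.
  by apply: eq_bigr => v _ /=; rewrite rmorphM !rmorphD /=; ring.
have S1 : \sum_u \sum_v ((u == w)%:Z)%:~R * (((v == w)%:Z)%:~R * x u v) = 0 :> R.
  by under eq_bigr do rewrite -mulr_sumr; rewrite !sum_indicator_mul dx.
have S2 : \sum_u \sum_v ((u == w)%:Z)%:~R * ((y v)%:~R * x u v) =
    \sum_v (y v)%:~R * x w v :> R.
  by under eq_bigr do rewrite -mulr_sumr; rewrite sum_indicator_mul.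
have S3 : \sum_u \sum_v (y u)%:~R * (((v == w)%:Z)%:~R * x u v) =
    \sum_v (y v)%:~R * x w v :> R.
  by apply: eq_bigr => u _; rewrite -mulr_sumr sum_indicator_mul xC.
have S4 : \sum_u \sum_v (y u)%:~R * ((y v)%:~R * x u v) =
    \sum_u \sum_v (y u * y v)%:~R * x u v :> R.
  by apply: eq_bigr => u _; apply: eq_bigr => v _; rewrite rmorphM mulrA.
by rewrite S1 S2 S3 S4; ring.
Qed.

Lemma inYN y : inY vtx y -> inY vtx (fun v => - y v).
Proof.
case=> y0 y1; split; last by rewrite sumrN y1 oppr0.
by under eq_bigr do rewrite rmorphN scaleNr; rewrite sumrN y0 oppr0.
Qed.

(* Comparing the equations for [y] and [-y] isolates the part linear in [y]. *)
Lemma faceY_orthY x : faceY x -> forall w, orthY (fun v => x w v).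
Proof.
case=> [[sx dx _] qx] w y yY.
have := qx w y yY; have := qx w _ (inYN yY); rewrite !hform_shiftY //.
have -> : hform x (fun v => - y v) = hform x y.
  by apply: eq_bigr => u _; apply: eq_bigr => v _; rewrite mulrNN.
have -> : \sum_v ((- y v)%:~R : R) * x w v = - \sum_v (y v)%:~R * x w v.
  by rewrite -sumrN; apply: eq_bigr => v _; rewrite rmorphN mulNr.
lra.
Qed.

Local Notation dz v := (zrow v - zrow e).

(* A symmetric [x] whose rows are affine in [z] is affine in each variable
   separately, hence a quadratic polynomial in [(z w, z v)]. *)
Lemma biaffine_of_orthY (x : 'M[R]_m) : x^T = x -> (forall w, orthY (fun v => x w v)) ->
  exists (g : 'cV[R]_n) (P : 'M[R]_n), forall w v,
    x w v = x e e + (dz w *m g) 0 0 + (dz v *m g) 0 0 + bform P (dz v) (dz w).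
Proof.
move=> sx rowsY; have xC u v : x u v = x v u by rewrite -[in LHS]sx mxE.
pose G w := affine_coef (fun v => x w v).
have colsY j : orthY (fun w => G w j 0).
  apply: (@eq_orthY (fun w => \sum_i invmx Zmx j i * (x (f' i) w - x e w))).
    by move=> w; rewrite !mxE; apply: eq_bigr => i _; rewrite mxE (xC (f' i)) (xC e).
  by apply: orthY_sum => i; apply: orthYB.
pose P : 'M[R]_n := \matrix_(j, l) affine_coef (fun w => G w j 0) l 0.
exists (G e), P => w v.
have col_e : x w e = x e e + (dz w *m G e) 0 0.
  by rewrite xC; exact: orthY_affine (rowsY e) w.
have cross : (dz v *m G w) 0 0 = (dz v *m G e) 0 0 + bform P (dz v) (dz w).
  rewrite mxE [X in _ = X + _]mxE bformE -big_split; apply: eq_bigr => j _ /=.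
  rewrite (orthY_affine (colsY j) w) mulrDr [(_ *m affine_coef _) 0 0]mxE mulr_sumr.
  by congr (_ + _); apply: eq_bigr => l _; rewrite [P j l]mxE; ring.
by rewrite (orthY_affine (rowsY w) v) col_e cross !addrA.
Qed.

Lemma biaffine_dist_form (x : 'M[R]_m) (g : 'cV[R]_n) (P : 'M[R]_n) :
  x^T = x -> (forall u, x u u = 0) ->
  (forall w v,
     x w v = x e e + (dz w *m g) 0 0 + (dz v *m g) 0 0 + bform P (dz v) (dz w)) ->
  x = dist_form (- (1/4) *: (P + P^T)).
Proof.
move=> sx dx xE; apply/matrixP => u v; rewrite mxE bformZM bformDM bform_tr.
have -> : zrow u - zrow v = dz u - dz v by rewrite opprB addrA subrK.
have := xE u u; have := xE v v; have := xE u v; have := xE v u.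
have -> : x v u = x u v by rewrite -[in LHS]sx mxE.
rewrite !dx; set p := dz u; set q := dz v.
rewrite !bformBl !bformBr; lra.
Qed.

Lemma faceY_dist_form x : faceY x -> exists2 M, Bspace vtx z M & x = dist_form M.
Proof.
move=> xF; have [[sx dx _] _] := xF.
have [g [P xE]] := biaffine_of_orthY sx (faceY_orthY xF).
set M := - (1/4) *: (P + P^T); have xM := biaffine_dist_form sx dx xE.
exists M => //; apply/BspaceP; split.
  by rewrite /M linearZ linearD /= trmxK addrC.
apply: eq_orthY (faceY_orthY xF k0) => k.
by rewrite xM mxE zrow_k0 sub0r bformNl bformNr opprK.
Qed.

Section Perturbation.
Variable M : 'M[R]_n.
Hypotheses (M_sym : M^T = M) (M_orthY : orthY (fun k => bform M (zrow k) (zrow k))).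

Local Notation q := (fun k => bform M (zrow k) (zrow k)).

Definition defect (x : 'rV[R]_n) : R :=
  q e + ((x - zrow e) *m affine_coef q) 0 0 - bform M x x.

Lemma hform_dist_form b :
  \sum_u b u = 1 -> hform (dist_form M) b = 2 * defect (barycenter b).
Proof.
move=> b1; transitivity (\sum_u \sum_v ((b u)%:~R * (b v)%:~R) *
    bform M (zrow u - zrow v) (zrow u - zrow v)).
  by apply: eq_bigr => u _; apply: eq_bigr => v _; rewrite mxE rmorphM.
rewrite bform_sum_diff // sum_intr_eq1 // mulr1.
have -> : \sum_u (b u)%:~R * q u = q e + ((barycenter b - zrow e) *m affine_coef q) 0 0.
  under eq_bigr do rewrite (orthY_affine M_orthY) mulrDr.
  rewrite big_split /= -mulr_suml sum_intr_eq1 // mul1r; congr (_ + _).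
  have -> : barycenter b - zrow e = \sum_u (b u)%:~R *: (zrow u - zrow e).
    under [RHS]eq_bigr do rewrite scalerBr.
    by rewrite sumrB -scaler_suml sum_intr_eq1 // scale1r.
  rewrite mulmx_suml summxE; apply: eq_bigr => u _.
  by rewrite -scalemxAl [RHS]mxE.
by rewrite /defect /barycenter; ring.
Qed.

Lemma defect_bound : exists2 C, 0 <= C & forall x, `|defect x| <= C * (1 + sqnorm x).
Proof.
pose A := \sum_j `|affine_coef q j 0|; pose Q := \sum_i \sum_j `|M i j|.
pose a := q e - (zrow e *m affine_coef q) 0 0.
have A0 : 0 <= A by apply: sumr_ge0.
have Q0 : 0 <= Q by apply: sumr_ge0 => i _; apply: sumr_ge0.
exists (`|a| + A + Q) => [|x]; first by rewrite !addr_ge0.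
have S0 := sqnorm_ge0 x.
have lin := norm_mul_col_le (affine_coef q) x; have quad := norm_bform_le M x.
rewrite -/A in lin; rewrite -/Q in quad.
have -> : defect x = a + (x *m affine_coef q) 0 0 - bform M x x.
  by rewrite /defect mulmxBl [X in _ + X - _]mxE [X in _ + (_ + X) - _]mxE /a; ring.
have := ler_normB (a + (x *m affine_coef q) 0 0) (bform M x x).
have := ler_normD a ((x *m affine_coef q) 0 0).
have := mulr_ge0 (normr_ge0 a) S0; lra.
Qed.

Lemma defect_vtx zi : sphere_power (int_row zi) = 0 -> defect (int_row zi) = 0.
Proof.
by move=> /sphere_power_eq0[w ->]; rewrite /defect -(orthY_affine M_orthY) subrr.
Qed.

End Perturbation.

Lemma sphere_power_bound :
  exists2 C, 0 <= C &
    forall zi, sqnorm (int_row zi) <= C * (1 + sphere_power (int_row zi)).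
Proof.
pose N : 'M[R]_n := invmx B *m 1%:M *m (invmx B)^T.
pose CN := \sum_i \sum_j `|N i j|; pose e0 := vtx k0 - c.
have CN0 : 0 <= CN by apply: sumr_ge0 => i _; apply: sumr_ge0.
exists (CN * (2 + 2 * r ^+ 2 + 2 * sqnorm e0)) => [|zi].
  by rewrite mulr_ge0 // !addr_ge0 // mulr_ge0 ?sqr_ge0 ?sqnorm_ge0.
set x := int_row zi; have h0 := sphere_power_ge0 zi; rewrite -/x in h0.
have s1 : sqnorm x <= CN * sqnorm (x *m B).
  rewrite sqnorm_bform -{1 2}(mulmxK B_unit x) bform_mulmx -/N.
  exact: le_trans (ler_norm _) (norm_bform_le _ _).
have s2 : sqnorm (x *m B) <= 2 * (sphere_power x + r ^+ 2) + 2 * sqnorm e0.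
  have -> : x *m B = (vtx k0 + x *m B - c) - e0.
    by rewrite /e0 opprB addrA subrK addrC addKr.
  by rewrite /sphere_power subrK; apply: sqnormB_le.
have := ler_wpM2l CN0 s2; have := sqnorm_ge0 e0; have := sqr_ge0 r.
have := mulr_ge0 CN0 h0; have := mulr_ge0 (mulr_ge0 CN0 (sqr_ge0 r)) h0.
have := mulr_ge0 (mulr_ge0 CN0 (sqnorm_ge0 e0)) h0; nra.
Qed.

(* [hform] of the perturbation is [-2 * sphere_power + 2 s * defect] at the
   barycenter, and the power dominates [defect] on the lattice. *)
Lemma hyp_perturb M : Bspace vtx z M ->
  exists2 eps, 0 < eps & forall s, `|s| <= eps -> hyp (distP vtx + s *: dist_form M).
Proof.
move=> /BspaceP[sM MY].
have [Cg Cg0 defect_le] := defect_bound M.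
have [Ch Ch0 power_le] := sphere_power_bound.
have [eps eps0 dom] := int_domination Cg0 Ch0 (fun zi => defect_le _) power_le
  sphere_power_ge0 (defect_vtx MY).
exists eps => // s s_le; have [sd dd _] := hyp_distP; split.
- by rewrite linearD linearZ /= sd dist_form_tr.
- by move=> u; rewrite mxE dd mxE dist_form_diag mulr0 addr0.
- move=> b b1; rewrite -/(hform _ b) hformD hformZ.
  rewrite hform_distP_power // hform_dist_form //.
  rewrite barycenterE; set zi := (fun i => _).
  have := dom zi; have := sphere_power_ge0 zi.
  have := ler_norm (s * defect M (int_row zi)).
  rewrite normrM; have := ler_wpM2r (normr_ge0 (defect M (int_row zi))) s_le.
  nra.
Qed.

Lemma dist_form_eq0 M : M^T = M -> dist_form M = 0 -> M = 0.
Proof.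
move=> sM /matrixP dM0.
have q0 u v : bform M (zrow u - zrow v) (zrow u - zrow v) = 0.
  by have := dM0 u v; rewrite !mxE.
have ZMZ0 : Zmx *m M *m Zmx^T = 0.
  apply/matrixP => i j; rewrite -bform_row mxE.
  have := q0 (f' i) e; have := q0 (f' j) e; have := q0 (f' i) (f' j).
  have -> : zrow (f' i) - zrow (f' j) = row i Zmx - row j Zmx.
    by rewrite !row_Zmx opprB addrA subrK.
  by rewrite -!row_Zmx bformBB //; lra.
have ZT : Zmx^T \in unitmx by rewrite unitmx_tr Zmx_unit.
by rewrite -(mulKmx Zmx_unit M) -(mulmxK ZT (Zmx *m M)) ZMZ0 mul0mx mulmx0.
Qed.

Lemma min_face_distP_perturb M : Bspace vtx z M ->
  exists2 eps, 0 < eps &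
    min_face (@hyp R m) (distP vtx) (distP vtx + eps *: dist_form M).
Proof.
move=> /hyp_perturb[eps eps0 hyp_eps]; exists eps => // F [_ _ F_ext] F_dP.
have hyp_pos : hyp (distP vtx + eps *: dist_form M).
  by apply: hyp_eps; rewrite gtr0_norm.
have hyp_neg : hyp (distP vtx + (- eps) *: dist_form M).
  by apply: hyp_eps; rewrite normrN gtr0_norm.
have half : (0 < 2^-1 :> R) && (2^-1 < 1 :> R) by apply/andP; split; lra.
have mid : 2^-1 *: (distP vtx + eps *: dist_form M)
    + (1 - 2^-1) *: (distP vtx + (- eps) *: dist_form M) = distP vtx.
  by apply/matrixP => u v; rewrite !mxE; field.
by have := F_ext _ _ _ hyp_pos hyp_neg half; rewrite mid => /(_ F_dP)[].
Qed.

Lemma dim_Bspace_min_face :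
  exists k, is_dim (Bspace vtx z) k /\ is_dim (min_face (@hyp R m) (distP vtx)) k.
Proof.
apply: (is_dim_linear_image (f := dist_form)).
- split=> [|y _]; first exact: trmx0.
  by rewrite big1 // => i _; rewrite big1 // => j _; rewrite mxE mulr0.
- exact: Bspace_lin.
- by move=> M /BspaceP[sM _]; apply: dist_form_eq0.
- move=> x xF; apply/faceY_dist_form/(xF faceY).
    exact: faceY_face.
  exact: faceY_distP.
move=> M /min_face_distP_perturb[eps eps0 mf].
set d := distP vtx + eps *: dist_form M.
exists [:: d; distP vtx] => [v|].
  by rewrite !inE => /orP[] /eqP -> // F.
change (dist_form M \in <<[:: d; distP vtx]>>%VS).
have -> : dist_form M = eps^-1 *: (d - distP vtx).
  by rewrite /d addrC addKr scalerA mulVf ?scale1r // gt_eqF.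
by apply: memvZ; apply: memvB; apply: memv_span; rewrite !inE eqxx ?orbT.
Qed.

End Delaunay.

Theorem mainTheorem2 (R : realType) (n : nat) (B : 'M[R]_n) (m : nat)
    (vtx : 'I_m -> 'rV[R]_n) (k0 : 'I_m) (z : 'I_m -> 'I_n -> int) :
  B \in unitmx ->
  is_delaunay B vtx ->
  generates B vtx ->
  (forall k, vtx k - vtx k0 = \sum_(i < n) (z k i)%:~R *: row i B) ->
  exists k : nat,
    is_dim (Bspace vtx z) k /\ is_dim (min_face (@hyp R m) (distP vtx)) k.
Proof.
move=> B_unit [_ [c [r [sphere_empty sphere_vtx [f f_indep]]]]] _ vtx_coord.
exact (dim_Bspace_min_face B_unit vtx_coord f_indep sphere_empty sphere_vtx).
Qed.
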